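(* There exist a compact set $\mathcal A\subseteq\mathbb R^2$ with $\lambda^2(\mathcal A)=1/4$ and a $C^\infty$-function $\kappa\colon\mathbb R^2\to\mathbb R$ that is one-to-one on $\mathcal A$.
   Context: $\lambda^2$ denotes Lebesgue measure on $\mathbb R^2$. *)

From Stdlib Require Import Reals Lra List.
Open Scope R_scope.

Definition pt := (R * R)%type.

Definition dist2 (p q : pt) : R :=
  sqrt ((fst p - fst q)^2 + (snd p - snd q)^2).

Definition open2 (U : pt -> Prop) : Prop :=
  forall p, U p -> exists eps, 0 < eps /\ forall q, dist2 p q < eps -> U q.

Definition compact2 (A : pt -> Prop) : Prop :=
  forall (I : Type) (U : I -> pt -> Prop),
    (forall i, open2 (U i)) ->
    (forall p, A p -> exists i, U i p) ->
    exists l : list I, forall p, A p -> exists i, In i l /\ U i p.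

(* Lebesgue (outer) measure on R^2: infimum of the total area of countable
   covers by closed rectangles [a n, b n] x [c n, d n].  For compact (hence
   Lebesgue measurable) sets this is the Lebesgue measure lambda^2. *)
Definition rect_cover_sums (A : pt -> Prop) (s : R) : Prop :=
  exists a b c d : nat -> R,
    (forall n, a n <= b n /\ c n <= d n) /\
    (forall p, A p -> exists n,
        a n <= fst p <= b n /\ c n <= snd p <= d n) /\
    infinite_sum (fun n => (b n - a n) * (d n - c n)) s.

Definition is_glb (E : R -> Prop) (m : R) : Prop :=
  (forall x, E x -> m <= x) /\ (forall m', (forall x, E x -> m' <= x) -> m' <= m).

Definition lambda2_is (A : pt -> Prop) (m : R) : Prop :=
  is_glb (rect_cover_sums A) m.

Definition continuous2 (f : pt -> R) : Prop :=
  forall p eps, 0 < eps -> exists delta, 0 < delta /\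
    forall q, dist2 p q < delta -> Rabs (f q - f p) < eps.

Fixpoint Ck2 (k : nat) (f : pt -> R) : Prop :=
  match k with
  | O => continuous2 f
  | S k' => continuous2 f /\
      exists fx fy : pt -> R,
        (forall x y, derivable_pt_lim (fun t => f (t, y)) x (fx (x, y))) /\
        (forall x y, derivable_pt_lim (fun t => f (x, t)) y (fy (x, y))) /\
        Ck2 k' fx /\ Ck2 k' fy
  end.

Definition smooth2 (f : pt -> R) : Prop := forall k, Ck2 k f.

Definition injective_on (f : pt -> R) (A : pt -> Prop) : Prop :=
  forall p q, A p -> A q -> f p = f q -> p = q.

(* A is C x C for a Cantor-type set C in [0, 1] whose 2^n level-n intervals have
   length 2^{-n-1}(1 + 2^{-n}) and are separated by gaps of width at least 4^{-n}, so
   that lambda(C) = lim 2^n 2^{-n-1}(1 + 2^{-n}) = 1/2.  A C^oo step rising inside the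
   gaps gives a smooth staircase phi_n equal to j on the j-th level-n interval, and
   kappa(x, y) = sum_n (w_{2n} phi_n(x) + w_{2n+1} phi_n(y)) with w_m = 2^{-2m^2}.
   These weights decay fast enough for all derivatives of the series to converge
   uniformly, and each weight exceeds the largest possible contribution of all later
   terms, so kappa on C x C determines every interval index of x and y, hence x and y.
   For the measure, the level-n squares give covers of area ((1 + 2^{-n})/2)^2; in the
   other direction, compactness turns any countable rectangle cover into a finite one
   that, for n large, contains every level-n square in a slightly enlarged rectangle,
   and counting squares bounds the total area below by 4^n |I_n|^2 >= 1/4. *)

From Stdlib Require Import Reals Lra Lia Arith ZArith List.
From Stdlib Require Import FunctionalExtensionality IndefiniteDescription Classical.
From Coquelicot Require Import Coquelicot.
Open Scope R_scope.

(** * Smooth functions of one variable *)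

Fixpoint Ck1 (k : nat) (f : R -> R) : Prop :=
  match k with
  | O => True
  | S k' => exists f', (forall x, derivable_pt_lim f x (f' x)) /\ Ck1 k' f'
  end.

Definition deriv_tower (D : nat -> R -> R) : Prop :=
  forall j x, derivable_pt_lim (D j) x (D (S j) x).

Lemma Ck1_S_Ck1 k f : Ck1 (S k) f -> Ck1 k f.
Proof.
  revert f; induction k as [|k IHk]; intros f [f' [Hf' Hk]]; simpl; auto.
  exists f'; auto.
Qed.

Lemma Ck1_ext k f g : (forall x, f x = g x) -> Ck1 k f -> Ck1 k g.
Proof. intros E; replace g with f by (apply functional_extensionality; auto); auto. Qed.

Lemma Ck1_const k c : Ck1 k (fun _ => c).
Proof.
  revert c; induction k as [|k IHk]; intros c; simpl; [exact I|].
  exists (fun _ => 0); split; [intros; apply derivable_pt_lim_const | apply IHk].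
Qed.

Lemma Ck1_plus k f g : Ck1 k f -> Ck1 k g -> Ck1 k (fun x => f x + g x).
Proof.
  revert f g; induction k as [|k IHk]; intros f g; simpl; auto.
  intros [f' [Hf Hf']] [g' [Hg Hg']].
  exists (fun x => f' x + g' x); split; auto.
  intros x; apply (derivable_pt_lim_plus f g); auto.
Qed.

Lemma Ck1_mult k f g : Ck1 k f -> Ck1 k g -> Ck1 k (fun x => f x * g x).
Proof.
  revert f g; induction k as [|k IHk]; intros f g Cf Cg; simpl; auto.
  pose proof (Ck1_S_Ck1 _ _ Cf) as Cf0; pose proof (Ck1_S_Ck1 _ _ Cg) as Cg0.
  destruct Cf as [f' [Hf Hf']], Cg as [g' [Hg Hg']].
  exists (fun x => f' x * g x + f x * g' x); split.
  - intros x; apply (derivable_pt_lim_mult f g); auto.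
  - apply Ck1_plus; apply IHk; auto.
Qed.

Lemma Ck1_scal k a f : Ck1 k f -> Ck1 k (fun x => a * f x).
Proof. intros; apply Ck1_mult; auto using Ck1_const. Qed.

Lemma Ck1_comp_affine k a c f : Ck1 k f -> Ck1 k (fun x => f (a * x + c)).
Proof.
  revert f; induction k as [|k IHk]; intros f; simpl; auto.
  intros [f' [Hf Hf']].
  exists (fun x => a * f' (a * x + c)); split.
  - intros x; rewrite Rmult_comm.
    apply (derivable_pt_lim_comp (fun x => a * x + c) f); auto.
    apply is_derive_Reals; auto_derive; auto; ring.
  - apply Ck1_scal, IHk; auto.
Qed.

Lemma Ck1_inv k h : (forall x, h x <> 0) -> Ck1 k h -> Ck1 k (fun x => / h x).
Proof.
  revert h; induction k as [|k IHk]; intros h Hh0 Ch; simpl; auto.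
  pose proof (Ck1_S_Ck1 _ _ Ch) as Ch0.
  destruct Ch as [h' [Hh Hh']].
  exists (fun x => (-1) * h' x * (/ h x * / h x)); split.
  - intros x; apply is_derive_Reals.
    replace ((-1) * h' x * (/ h x * / h x)) with (- h' x / (h x) ^ 2)
      by (field; auto).
    apply is_derive_inv; auto; apply is_derive_Reals; auto.
  - apply Ck1_mult; [apply Ck1_scal; auto|].
    apply Ck1_mult; apply IHk; auto.
Qed.

Lemma Ck1_deriv_tower f : (forall k, Ck1 k f) -> deriv_tower (Derive_n f).
Proof.
  intros Cf j; specialize (Cf (S j)); revert f Cf.
  induction j as [|j IHj]; intros f [f' [Hf Hf']] x.
  - simpl; replace (Derive (fun y => f y) x) with (f' x); [auto|].
    symmetry; apply is_derive_unique, is_derive_Reals; auto.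
  - assert (Ef : Derive f = f').
    { apply functional_extensionality; intros y.
      apply is_derive_unique, is_derive_Reals; auto. }
    assert (Eshift : forall n, Derive_n f (S n) = Derive_n f' n).
    { intros n; apply functional_extensionality; intros y.
      rewrite <- Ef; clear; revert y; induction n; intros y; auto.
      simpl; f_equal; apply functional_extensionality; auto. }
    rewrite !Eshift; apply IHj; auto.
Qed.

(** * A smooth step function *)

Definition flat_exp (m : nat) (t : R) : R :=
  if Rlt_dec 0 t then exp (- / t) * (/ t) ^ m else 0.

Lemma flat_exp_le0 m t : t <= 0 -> flat_exp m t = 0.
Proof. intros; unfold flat_exp; destruct (Rlt_dec 0 t); [lra | auto]. Qed.

Lemma pow_div_fact_le_exp u n : 0 <= u -> u ^ n / INR (fact n) <= exp u.
Proof.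
  intros Hu; eapply Rle_trans; [|apply (exp_ge_taylor u n Hu)].
  destruct n as [|n]; simpl; [lra|].
  enough (0 <= sum_f_R0 (fun k => u ^ k / INR (fact k)) n) by lra.
  apply cond_pos_sum; intros k.
  apply Rdiv_le_0_compat; [apply pow_le; auto | apply lt_0_INR, lt_O_fact].
Qed.

Lemma exp_neg_inv_pow_le m t : 0 < t -> exp (- / t) * (/ t) ^ S m <= INR (fact (S (S m))) * t.
Proof.
  intros Ht; set (u := / t).
  assert (Hu : 0 < u) by (apply Rinv_0_lt_compat; auto).
  replace t with (/ u) by (unfold u; rewrite Rinv_inv; auto).
  rewrite exp_Ropp.
  pose proof (pow_div_fact_le_exp u (S (S m)) (Rlt_le _ _ Hu)) as E.
  assert (F : 0 < INR (fact (S (S m)))) by apply lt_0_INR, lt_O_fact.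
  set (F' := INR (fact (S (S m)))) in *; change (u ^ S (S m)) with (u * u ^ S m) in E.
  pose proof (exp_pos u).
  apply Rmult_le_reg_l with (exp u * u / F'); [apply Rdiv_lt_0_compat; nra|].
  replace (exp u * u / F' * (/ exp u * u ^ S m)) with (u * u ^ S m / F') by (field; lra).
  replace (exp u * u / F' * (F' * / u)) with (exp u) by (field; lra).
  exact E.
Qed.

(* The estimate behind the flatness of [flat_exp m] at 0. *)
Lemma flat_exp_S_abs_le m h : Rabs (flat_exp (S m) h) <= INR (fact (S (S m))) * Rabs h.
Proof.
  pose proof (Rabs_pos h); assert (0 < INR (fact (S (S m)))) by apply lt_0_INR, lt_O_fact.
  unfold flat_exp; destruct (Rlt_dec 0 h) as [Hh|Hh]; [|rewrite Rabs_R0; nra].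
  assert (0 <= exp (- / h) * (/ h) ^ S m).
  { apply Rmult_le_pos; [left; apply exp_pos | apply pow_le; left; apply Rinv_0_lt_compat; auto]. }
  rewrite !Rabs_right by lra; apply exp_neg_inv_pow_le; auto.
Qed.

Lemma ball_R_between c (e : posreal) y : ball c e y -> c - e < y < c + e.
Proof. intros Hy; apply Rabs_lt_between'; exact Hy. Qed.

Lemma derivable_pt_lim_flat_exp_0 m : derivable_pt_lim (flat_exp m) 0 0.
Proof.
  intros eps Heps; assert (F : 0 < INR (fact (S (S m)))) by apply lt_0_INR, lt_O_fact.
  pose proof (flat_exp_S_abs_le m) as Hle; set (F' := INR (fact (S (S m)))) in *.
  exists (mkposreal (eps / F') ltac:(apply Rdiv_lt_0_compat; auto)); intros h Hh Hhd; simpl in Hhd.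
  replace ((flat_exp m (0 + h) - flat_exp m 0) / h - 0) with (flat_exp (S m) h).
  - eapply Rle_lt_trans; [apply Hle|].
    apply Rmult_lt_compat_l with (r := F') in Hhd; auto.
    replace (F' * (eps / F')) with eps in Hhd by (field; lra); auto.
  - rewrite Rplus_0_l; unfold flat_exp; destruct (Rlt_dec 0 0); [lra|].
    destruct (Rlt_dec 0 h); simpl; field; auto.
Qed.

Lemma derivable_pt_lim_flat_exp m x :
  derivable_pt_lim (flat_exp m) x (flat_exp (m + 2) x - INR m * flat_exp (m + 1) x).
Proof.
  destruct (Rlt_le_dec 0 x) as [Hx|[Hx|Hx]]; [| |subst x].
  - apply is_derive_Reals.
    apply is_derive_ext_loc with (fun t => exp (- / t) * (/ t) ^ m).
    + exists (mkposreal x Hx); intros y Hy; apply ball_R_between in Hy; simpl in Hy.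
      unfold flat_exp; destruct (Rlt_dec 0 y); auto; lra.
    + unfold flat_exp; destruct (Rlt_dec 0 x); [|lra].
      auto_derive; [lra|].
      destruct m as [|m]; [simpl; field; lra|].
      rewrite !S_INR; replace (S m + 2)%nat with (S (S (S m))) by lia.
      replace (S m + 1)%nat with (S (S m)) by lia; simpl; field; lra.
  - apply is_derive_Reals.
    apply is_derive_ext_loc with (fun _ => 0).
    + exists (mkposreal (- x) ltac:(lra)); intros y Hy; apply ball_R_between in Hy; simpl in Hy.
      unfold flat_exp; destruct (Rlt_dec 0 y); auto; lra.
    + unfold flat_exp; destruct (Rlt_dec 0 x); [lra|].
      replace (0 - INR m * 0) with 0 by ring; auto_derive; auto.
  - rewrite !flat_exp_le0 by lra; replace (0 - INR m * 0) with 0 by ring.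
    apply derivable_pt_lim_flat_exp_0.
Qed.

Lemma flat_exp_Ck1 k m : Ck1 k (flat_exp m).
Proof.
  revert m; induction k as [|k IHk]; intros m; simpl; auto.
  exists (fun x => flat_exp (m + 2) x - INR m * flat_exp (m + 1) x); split.
  - apply derivable_pt_lim_flat_exp.
  - apply Ck1_ext with (fun x => flat_exp (m + 2) x + (- INR m) * flat_exp (m + 1) x).
    { intros; ring. }
    apply Ck1_plus; auto; apply Ck1_scal; auto.
Qed.

Lemma flat_exp0_ge0 t : 0 <= flat_exp 0 t.
Proof. unfold flat_exp; destruct (Rlt_dec 0 t); simpl; [rewrite Rmult_1_r; left; apply exp_pos | lra]. Qed.

Lemma flat_exp0_gt0 t : 0 < t -> 0 < flat_exp 0 t.
Proof. intros; unfold flat_exp; destruct (Rlt_dec 0 t); simpl; [rewrite Rmult_1_r; apply exp_pos | lra]. Qed.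

Definition smooth_step (t : R) : R := flat_exp 0 t / (flat_exp 0 t + flat_exp 0 (1 - t)).

Lemma smooth_step_den_gt0 t : 0 < flat_exp 0 t + flat_exp 0 (1 - t).
Proof.
  pose proof (flat_exp0_ge0 t); pose proof (flat_exp0_ge0 (1 - t)).
  destruct (Rlt_le_dec 0 t).
  - pose proof (flat_exp0_gt0 t); lra.
  - pose proof (flat_exp0_gt0 (1 - t)); lra.
Qed.

Lemma smooth_step_Ck1 k : Ck1 k smooth_step.
Proof.
  apply Ck1_mult; [apply flat_exp_Ck1|].
  apply Ck1_inv; [intros x; pose proof (smooth_step_den_gt0 x); lra|].
  apply Ck1_plus; [apply flat_exp_Ck1|].
  apply Ck1_ext with (fun x => flat_exp 0 ((-1) * x + 1)); [intros; f_equal; ring|].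
  apply Ck1_comp_affine, flat_exp_Ck1.
Qed.

Lemma smooth_step_le0 t : t <= 0 -> smooth_step t = 0.
Proof. intros; unfold smooth_step; rewrite flat_exp_le0; auto; unfold Rdiv; ring. Qed.

Lemma smooth_step_ge1 t : 1 <= t -> smooth_step t = 1.
Proof.
  intros; unfold smooth_step; rewrite (flat_exp_le0 0 (1 - t)) by lra.
  pose proof (flat_exp0_gt0 t ltac:(lra)); field; lra.
Qed.

Lemma smooth_step_bounds t : 0 <= smooth_step t <= 1.
Proof.
  unfold smooth_step; pose proof (smooth_step_den_gt0 t).
  pose proof (flat_exp0_ge0 t); pose proof (flat_exp0_ge0 (1 - t)).
  split; [apply Rdiv_le_0_compat; auto|].
  apply Rmult_le_reg_r with (flat_exp 0 t + flat_exp 0 (1 - t)); auto.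
  unfold Rdiv; rewrite Rmult_assoc, Rinv_l; lra.
Qed.

Definition step_deriv (j : nat) : R -> R := Derive_n smooth_step j.

Lemma step_deriv_tower : deriv_tower step_deriv.
Proof. apply Ck1_deriv_tower, smooth_step_Ck1. Qed.

Lemma deriv_tower_continuity D : deriv_tower D -> forall j x, continuity_pt (D j) x.
Proof. intros HD j x; apply derivable_continuous_pt; exists (D (S j) x); apply HD. Qed.

Lemma step_deriv_off t j : t < 0 \/ 1 < t -> Rabs (step_deriv j t) <= 1.
Proof.
  intros Ht; destruct j as [|j].
  - change (step_deriv 0 t) with (smooth_step t).
    pose proof (smooth_step_bounds t); rewrite Rabs_right; lra.
  - assert (Hloc : forall c, locally t (fun y => smooth_step y = c) ->
                   Rabs (step_deriv (S j) t) <= 1).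
    { intros c Hc; unfold step_deriv; rewrite (Derive_n_ext_loc _ _ _ _ Hc).
      rewrite Derive_n_const, Rabs_R0; lra. }
    destruct Ht as [Ht|Ht]; [apply (Hloc 0) | apply (Hloc 1)].
    + exists (mkposreal (- t) ltac:(lra)); intros y Hy.
      apply ball_R_between in Hy; simpl in Hy; apply smooth_step_le0; lra.
    + exists (mkposreal (t - 1) ltac:(lra)); intros y Hy.
      apply ball_R_between in Hy; simpl in Hy; apply smooth_step_ge1; lra.
Qed.

Lemma continuity_bounded_off_compact f a b c :
  a <= b -> (forall x, continuity_pt f x) ->
  (forall t, t < a \/ b < t -> Rabs (f t) <= c) ->
  exists M, forall t, Rabs (f t) <= M.
Proof.
  intros Hab Hf Hoff.
  destruct (continuity_ab_maj f a b Hab) as [u [Hu _]]; [intros; apply Hf|].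
  destruct (continuity_ab_min f a b Hab) as [v [Hv _]]; [intros; apply Hf|].
  exists (Rmax c (Rmax (f u) (- f v))); intros t.
  destruct (Rlt_le_dec t a) as [Ht|Ht]; [eapply Rle_trans; [apply Hoff; auto | apply Rmax_l]|].
  destruct (Rlt_le_dec b t) as [Ht'|Ht']; [eapply Rle_trans; [apply Hoff; auto | apply Rmax_l]|].
  specialize (Hu t (conj Ht Ht')); specialize (Hv t (conj Ht Ht')).
  eapply Rle_trans; [|apply Rmax_r]; apply Rabs_le.
  pose proof (Rmax_l (f u) (- f v)); pose proof (Rmax_r (f u) (- f v)); lra.
Qed.

Definition step_deriv_bound (j : nat) : R :=
  proj1_sig (constructive_indefinite_description _
    (continuity_bounded_off_compact (step_deriv j) 0 1 1 Rle_0_1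
       (deriv_tower_continuity _ step_deriv_tower j) (fun t => step_deriv_off t j))).

Lemma step_deriv_bound_spec j t : Rabs (step_deriv j t) <= step_deriv_bound j.
Proof.
  unfold step_deriv_bound; destruct (constructive_indefinite_description _ _); simpl; auto.
Qed.

Lemma step_deriv_bound_ge0 j : 0 <= step_deriv_bound j.
Proof. eapply Rle_trans; [apply Rabs_pos | apply (step_deriv_bound_spec j 0)]. Qed.

(** * Termwise differentiation of series *)

Lemma Un_cv_Series a : ex_series a -> Un_cv (sum_f_R0 a) (Series a).
Proof. intros; apply is_series_Reals, Series_correct; auto. Qed.

Lemma series_tail_le a b A B :
  Un_cv (sum_f_R0 a) A -> Un_cv (sum_f_R0 b) B -> (forall k, Rabs (a k) <= b k) ->
  forall n, Rabs (A - sum_f_R0 a n) <= B - sum_f_R0 b n.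
Proof.
  intros Ha Hb Hab n.
  assert (Hpartial : forall m, Rabs (sum_f_R0 a (m + n) - sum_f_R0 a n)
                               <= sum_f_R0 b (m + n) - sum_f_R0 b n).
  { induction m as [|m IHm]; simpl.
    - rewrite Rminus_diag, Rabs_R0; lra.
    - replace (sum_f_R0 a (m + n) + a (S (m + n)) - sum_f_R0 a n)
        with ((sum_f_R0 a (m + n) - sum_f_R0 a n) + a (S (m + n))) by ring.
      pose proof (Hab (S (m + n))); eapply Rle_trans; [apply Rabs_triang | lra]. }
  apply is_lim_seq_Reals in Ha; apply is_lim_seq_Reals in Hb.
  apply (is_lim_seq_le _ _ (Rabs (A - sum_f_R0 a n)) (B - sum_f_R0 b n) Hpartial).
  - apply (is_lim_seq_abs _ (A - sum_f_R0 a n)), is_lim_seq_minus';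
      [apply (is_lim_seq_incr_n (sum_f_R0 a) n A); auto | apply is_lim_seq_const].
  - apply is_lim_seq_minus';
      [apply (is_lim_seq_incr_n (sum_f_R0 b) n B); auto | apply is_lim_seq_const].
Qed.

Lemma derivable_pt_lim_sum_f_R0 (f f' : nat -> R -> R) N x :
  (forall n, derivable_pt_lim (f n) x (f' n x)) ->
  derivable_pt_lim (fun y => sum_f_R0 (fun n => f n y) N) x (sum_f_R0 (fun n => f' n x) N).
Proof.
  intros Hf; induction N as [|N IHN]; simpl; auto.
  apply (derivable_pt_lim_plus (fun y => sum_f_R0 (fun n => f n y) N) (f (S N))); auto.
Qed.

Section SeriesTower.
Variable T : nat -> nat -> R -> R.
Variable B : nat -> nat -> R.
Hypothesis T_tower : forall n, deriv_tower (T n).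
Hypothesis T_bound : forall n j x, Rabs (T n j x) <= B n j.
Hypothesis B_summable : forall j, ex_series (fun n => B n j).

Definition series_tower (j : nat) (x : R) : R := Series (fun n => T n j x).

Lemma series_tower_cv j x : Un_cv (sum_f_R0 (fun n => T n j x)) (series_tower j x).
Proof.
  apply Un_cv_Series.
  apply (@ex_series_le R_AbsRing R_CompleteNormedModule _ (fun n => B n j)); auto.
Qed.

Lemma series_tower_deriv : deriv_tower series_tower.
Proof.
  intros j x.
  assert (Hr : 0 < Rabs x + 1) by (pose proof (Rabs_pos x); lra).
  apply (CVU_derivable (fun N y => sum_f_R0 (fun n => T n j y) N)
           (fun N y => sum_f_R0 (fun n => T n (S j) y) N)
           (series_tower j) (series_tower (S j)) 0 (mkposreal _ Hr)).
  - intros eps Heps.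
    destruct (Un_cv_Series _ (B_summable (S j)) eps Heps) as [N HN].
    exists N; intros n y Hn _.
    eapply Rle_lt_trans.
    { apply (series_tail_le (fun k => T k (S j) y) (fun k => B k (S j)));
        auto using series_tower_cv, Un_cv_Series. }
    specialize (HN n Hn); unfold R_dist in HN; rewrite Rabs_minus_sym in HN.
    eapply Rle_lt_trans; [apply Rle_abs | auto].
  - intros y _; apply series_tower_cv.
  - intros n y _; apply (derivable_pt_lim_sum_f_R0 (fun k => T k j) (fun k => T k (S j))).
    intros; apply T_tower.
  - unfold Boule; simpl; rewrite Rminus_0_r; lra.
Qed.

End SeriesTower.

(** * A Cantor set of measure 1/2 *)

Definition cantor_len (n : nat) : R := (/ 2) ^ S n * (1 + (/ 2) ^ n).
Definition cantor_gap (n : nat) : R := (/ 4) ^ n.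

(* Left end of the [j]-th level-[n] interval.  Indices [j >= 2 ^ n] continue the
   same pattern to the right, so that [cantor_left n] is increasing for all [j]. *)
Fixpoint cantor_left (n j : nat) : R :=
  match n with
  | O => 2 * INR j
  | S n' => cantor_left n' (Nat.div2 j) +
              (if Nat.odd j then cantor_len (S n') + cantor_gap (S n') else 0)
  end.

Definition in_cantor_int (n j : nat) (x : R) : Prop :=
  cantor_left n j <= x <= cantor_left n j + cantor_len n.

Definition cantor (x : R) : Prop :=
  forall n, exists j, (j < 2 ^ n)%nat /\ in_cantor_int n j x.

Definition cantor_square (p : pt) : Prop := cantor (fst p) /\ cantor (snd p).

Lemma cantor_len_split n : cantor_len n = 2 * cantor_len (S n) + cantor_gap (S n).
Proof.
  unfold cantor_len, cantor_gap; simpl.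
  replace (/ 4) with (/ 2 * / 2) by field; rewrite Rpow_mult_distr; field.
Qed.

Lemma pow_half_bounds n : 0 < (/ 2) ^ n <= 1.
Proof. induction n; simpl; nra. Qed.

Lemma cantor_len_gt0 n : 0 < cantor_len n.
Proof. unfold cantor_len; pose proof (pow_half_bounds n); pose proof (pow_half_bounds (S n)); nra. Qed.

Lemma cantor_len_le n : cantor_len n <= (/ 2) ^ n.
Proof. unfold cantor_len; pose proof (pow_half_bounds n); simpl; nra. Qed.

Lemma cantor_gap_gt0 n : 0 < cantor_gap n.
Proof. apply pow_lt; lra. Qed.

Lemma cantor_gap_S_le n : cantor_gap (S n) <= cantor_gap n.
Proof. unfold cantor_gap; simpl; pose proof (pow_lt (/ 4) n ltac:(lra)); lra. Qed.

Lemma cantor_left_double n m : cantor_left (S n) (2 * m) = cantor_left n m.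
Proof. cbn [cantor_left]; rewrite Nat.div2_double, Nat.odd_even; ring. Qed.

Lemma cantor_left_double_S n m :
  cantor_left (S n) (2 * m + 1) = cantor_left n m + cantor_len (S n) + cantor_gap (S n).
Proof. cbn [cantor_left]; rewrite Nat.odd_odd, Nat.div2_odd'; ring. Qed.

Lemma cantor_left_S n j :
  cantor_left n j + cantor_len n + cantor_gap n <= cantor_left n (S j).
Proof.
  revert j; induction n as [|n IHn]; intros j.
  - cbn [cantor_left]; unfold cantor_len, cantor_gap; rewrite S_INR; simpl; lra.
  - destruct (Nat.Even_or_Odd j) as [[m ->]|[m ->]].
    + replace (S (2 * m)) with (2 * m + 1)%nat by lia.
      rewrite cantor_left_double_S, cantor_left_double; lra.
    + replace (S (2 * m + 1)) with (2 * S m)%nat by lia.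
      rewrite cantor_left_double_S, cantor_left_double.
      specialize (IHn m); rewrite (cantor_len_split n) in IHn.
      pose proof (cantor_gap_S_le n); lra.
Qed.

Lemma cantor_left_lt n j j' : (j < j')%nat ->
  cantor_left n j + cantor_len n + cantor_gap n <= cantor_left n j'.
Proof.
  induction 1; [apply cantor_left_S|].
  pose proof (cantor_left_S n m); pose proof (cantor_len_gt0 n); pose proof (cantor_gap_gt0 n); lra.
Qed.

Lemma cantor_left_le n j j' : (j <= j')%nat -> cantor_left n j <= cantor_left n j'.
Proof.
  intros Hjj; destruct (Nat.eq_dec j j') as [->|Hne]; [lra|].
  pose proof (cantor_left_lt n j j' ltac:(lia)).
  pose proof (cantor_len_gt0 n); pose proof (cantor_gap_gt0 n); lra.
Qed.

Lemma cantor_left_parent_le n j : cantor_left n (Nat.div2 j) <= cantor_left (S n) j.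
Proof.
  destruct (Nat.Even_or_Odd j) as [[m ->]|[m ->]].
  - rewrite Nat.div2_double, cantor_left_double; lra.
  - rewrite Nat.div2_odd', cantor_left_double_S.
    pose proof (cantor_len_gt0 (S n)); pose proof (cantor_gap_gt0 (S n)); lra.
Qed.

Lemma cantor_right_le_parent n j :
  cantor_left (S n) j + cantor_len (S n) <= cantor_left n (Nat.div2 j) + cantor_len n.
Proof.
  rewrite (cantor_len_split n); pose proof (cantor_len_gt0 (S n)); pose proof (cantor_gap_gt0 (S n)).
  destruct (Nat.Even_or_Odd j) as [[m ->]|[m ->]].
  - rewrite Nat.div2_double, cantor_left_double; lra.
  - rewrite Nat.div2_odd', cantor_left_double_S; lra.
Qed.

Lemma in_cantor_int_unique n j j' x :
  in_cantor_int n j x -> in_cantor_int n j' x -> j = j'.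
Proof.
  intros [H1 H2] [H3 H4]; pose proof (cantor_gap_gt0 n).
  destruct (lt_eq_lt_dec j j') as [[Hlt|Heq]|Hlt]; auto.
  - pose proof (cantor_left_lt n j j' Hlt); lra.
  - pose proof (cantor_left_lt n j' j Hlt); lra.
Qed.

Lemma in_cantor_int_parent n j x : in_cantor_int (S n) j x -> in_cantor_int n (Nat.div2 j) x.
Proof.
  intros [H1 H2]; pose proof (cantor_left_parent_le n j); pose proof (cantor_right_le_parent n j).
  split; lra.
Qed.

Lemma abs_le_pow_half_eq0 z : (forall n, Rabs z <= (/ 2) ^ n) -> z = 0.
Proof.
  intros Hz; destruct (Req_dec z 0) as [|Hne]; auto; exfalso.
  destruct (pow_lt_1_zero (/ 2) ltac:(rewrite Rabs_right; lra) (Rabs z)) as [N HN].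
  { apply Rabs_pos_lt; auto. }
  specialize (HN N (le_n N)); specialize (Hz N).
  rewrite Rabs_right in HN by (left; apply pow_lt; lra); lra.
Qed.

Lemma in_cantor_int_eq x x' :
  (forall n, exists j, in_cantor_int n j x /\ in_cantor_int n j x') -> x = x'.
Proof.
  intros H; enough (x - x' = 0) by lra; apply abs_le_pow_half_eq0; intros n.
  destruct (H n) as [j [[H1 H2] [H3 H4]]]; pose proof (cantor_len_le n).
  apply Rabs_le; lra.
Qed.

(** * Smooth staircases counting the Cantor intervals *)

Fixpoint sum_lt (f : nat -> R) (J : nat) : R :=
  match J with O => 0 | S J' => sum_lt f J' + f J' end.

Lemma sum_lt_ext f g J : (forall j, (j < J)%nat -> f j = g j) -> sum_lt f J = sum_lt g J.
Proof. induction J; intros H; simpl; auto; rewrite IHJ, H; auto. Qed.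

Lemma sum_lt_le f g J : (forall j, (j < J)%nat -> f j <= g j) -> sum_lt f J <= sum_lt g J.
Proof.
  induction J; intros H; simpl; [lra|].
  pose proof (H J ltac:(lia)); enough (sum_lt f J <= sum_lt g J) by lra.
  apply IHJ; intros; apply H; lia.
Qed.

Lemma sum_lt_plus f g J : sum_lt (fun j => f j + g j) J = sum_lt f J + sum_lt g J.
Proof. induction J; simpl; [lra | rewrite IHJ; ring]. Qed.

Lemma sum_lt_scal c f J : sum_lt (fun j => c * f j) J = c * sum_lt f J.
Proof. induction J; simpl; [ring | rewrite IHJ; ring]. Qed.

Lemma sum_lt_const c J : sum_lt (fun _ => c) J = INR J * c.
Proof. induction J; simpl sum_lt; [simpl; ring | rewrite IHJ, S_INR; ring]. Qed.

Lemma sum_lt_indicator K J : sum_lt (fun i => if lt_dec i K then 1 else 0) J = INR (Nat.min K J).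
Proof.
  induction J as [|J IHJ]; simpl sum_lt; [rewrite Nat.min_0_r; auto|].
  rewrite IHJ; destruct (lt_dec J K).
  - replace (Nat.min K (S J)) with (S J) by lia; replace (Nat.min K J) with J by lia.
    rewrite S_INR; ring.
  - replace (Nat.min K (S J)) with (Nat.min K J) by lia; ring.
Qed.

Lemma sum_lt_abs_le f J c : (forall k, Rabs (f k) <= c) -> Rabs (sum_lt f J) <= INR J * c.
Proof.
  intros H; induction J; simpl sum_lt; [rewrite Rabs_R0; simpl; lra|].
  eapply Rle_trans; [apply Rabs_triang|]; rewrite S_INR; specialize (H J); lra.
Qed.

Lemma derivable_pt_lim_sum_lt (f f' : nat -> R -> R) J x :
  (forall k, derivable_pt_lim (f k) x (f' k x)) ->
  derivable_pt_lim (fun y => sum_lt (fun k => f k y) J) x (sum_lt (fun k => f' k x) J).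
Proof.
  intros Hf; induction J; simpl; [apply derivable_pt_lim_const|].
  apply (derivable_pt_lim_plus (fun y => sum_lt (fun k => f k y) J) (f J)); auto.
Qed.

(* [i]-th derivative of the level-[n] staircase sum_{k < 2^n} S((x - r_k) / g_n), where
   [r_k] is the right end of the [k]-th interval: each step rises within the gap that
   follows its interval, so the staircase is [j] on the [j]-th interval. *)
Definition staircase_deriv (n i : nat) (x : R) : R :=
  sum_lt (fun k => (/ cantor_gap n) ^ i *
    step_deriv i ((x - (cantor_left n k + cantor_len n)) / cantor_gap n)) (2 ^ n).

Lemma staircase_deriv_tower n : deriv_tower (staircase_deriv n).
Proof.
  intros i x; unfold staircase_deriv.
  apply (derivable_pt_lim_sum_lt
    (fun k y => (/ cantor_gap n) ^ i * step_deriv i ((y - (cantor_left n k + cantor_len n)) / cantor_gap n))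
    (fun k y => (/ cantor_gap n) ^ S i * step_deriv (S i) ((y - (cantor_left n k + cantor_len n)) / cantor_gap n))).
  intros k; pose proof (cantor_gap_gt0 n).
  replace ((/ cantor_gap n) ^ S i * step_deriv (S i) ((x - (cantor_left n k + cantor_len n)) / cantor_gap n))
    with ((/ cantor_gap n) ^ i * (step_deriv (S i) ((x - (cantor_left n k + cantor_len n)) / cantor_gap n)
           * / cantor_gap n)) by (simpl; ring).
  apply derivable_pt_lim_scal.
  apply (derivable_pt_lim_comp (fun y => (y - (cantor_left n k + cantor_len n)) / cantor_gap n)
           (step_deriv i)); [|apply step_deriv_tower].
  apply is_derive_Reals; auto_derive; auto; field; lra.
Qed.

Lemma staircase_deriv_abs_le n i x :
  Rabs (staircase_deriv n i x) <= 2 ^ n * (4 ^ n) ^ i * step_deriv_bound i.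
Proof.
  unfold staircase_deriv; eapply Rle_trans; [apply (sum_lt_abs_le _ _ ((4 ^ n) ^ i * step_deriv_bound i))|].
  - intros k; unfold cantor_gap.
    rewrite Rabs_mult, (pow_inv 4), Rinv_inv, Rabs_right by (apply Rle_ge, pow_le, pow_le; lra).
    apply Rmult_le_compat_l; [apply pow_le, pow_le; lra | apply step_deriv_bound_spec].
  - rewrite pow_INR; replace (INR 2) with 2 by (simpl; ring); right; ring.
Qed.

Lemma staircase_on_interval n j x :
  (j < 2 ^ n)%nat -> in_cantor_int n j x -> staircase_deriv n 0 x = INR j.
Proof.
  intros Hj [H1 H2]; unfold staircase_deriv; pose proof (cantor_gap_gt0 n).
  rewrite (sum_lt_ext _ (fun k => if lt_dec k j then 1 else 0)).
  - rewrite sum_lt_indicator; f_equal; lia.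
  - intros k _; rewrite pow_O, Rmult_1_l; change (step_deriv 0) with smooth_step.
    destruct (lt_dec k j) as [Hkj|Hkj].
    + apply smooth_step_ge1; apply Rmult_le_reg_r with (cantor_gap n); auto.
      unfold Rdiv; rewrite Rmult_assoc, Rinv_l, Rmult_1_l, Rmult_1_r by lra.
      pose proof (cantor_left_lt n k j Hkj); lra.
    + apply smooth_step_le0; unfold Rdiv; apply Rmult_le_0_r; [|left; apply Rinv_0_lt_compat; auto].
      pose proof (cantor_left_le n j k ltac:(lia)); lra.
Qed.

(** * The smooth function and its injectivity on the square of the Cantor set *)

Lemma pow_half_antimono E F : (F <= E)%nat -> (/ 2) ^ E <= (/ 2) ^ F.
Proof.
  intros H; rewrite !pow_inv; apply Rinv_le_contravar; [apply pow_lt; lra | apply Rle_pow; auto; lra].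
Qed.

Lemma pow2_mul_pow_half k E : 2 ^ k * (/ 2) ^ (k + E) = (/ 2) ^ E.
Proof.
  rewrite pow_add, <- Rmult_assoc, <- Rpow_mult_distr.
  replace (2 * / 2) with 1 by field; rewrite pow1; ring.
Qed.

Definition weight (m : nat) : R := (/ 2) ^ (2 * m * m).
Definition weight_x (n : nat) : R := weight (2 * n).
Definition weight_y (n : nat) : R := weight (2 * n + 1).

Lemma weight_gt0 m : 0 < weight m.
Proof. apply pow_lt; lra. Qed.

Lemma weight_bounds n m : (n <= m)%nat -> 0 <= weight m <= (/ 2) ^ (n * n).
Proof. intros H; split; [left; apply weight_gt0 | apply pow_half_antimono; nia]. Qed.

Lemma pow_half_sq_mul_le n i : (/ 2) ^ (n * n) * 2 ^ n * (4 ^ n) ^ i <= 2 ^ ((i + 1) * (i + 1)) * (/ 2) ^ n.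
Proof.
  replace ((4 ^ n) ^ i) with (2 ^ (2 * n * i)) 
    by (rewrite <- pow_mult; replace 4 with (2 ^ 2) by ring; rewrite <- pow_mult; f_equal; lia).
  rewrite !pow_inv.
  assert (P1 : 0 < 2 ^ (n * n)) by (apply pow_lt; lra).
  assert (P2 : 0 < 2 ^ n) by (apply pow_lt; lra).
  apply Rmult_le_reg_r with (2 ^ (n * n) * 2 ^ n); [nra|].
  replace (/ 2 ^ (n * n) * 2 ^ n * 2 ^ (2 * n * i) * (2 ^ (n * n) * 2 ^ n)) with (2 ^ (n + 2 * n * i + n))
    by (rewrite !pow_add; field; lra).
  replace (2 ^ ((i + 1) * (i + 1)) * / 2 ^ n * (2 ^ (n * n) * 2 ^ n)) with (2 ^ ((i + 1) * (i + 1) + n * n))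
    by (rewrite !pow_add; field; lra).
  apply Rle_pow; [lra|].
  pose proof (Z.square_nonneg (Z.of_nat n - Z.of_nat i - 1)); nia.
Qed.

Lemma ex_series_weighted_bound (e : nat -> R) i M :
  0 <= M -> (forall n, 0 <= e n <= (/ 2) ^ (n * n)) ->
  ex_series (fun n => e n * 2 ^ n * (4 ^ n) ^ i * M).
Proof.
  intros HM He.
  apply (@ex_series_le R_AbsRing R_CompleteNormedModule _ (fun n => M * 2 ^ ((i + 1) * (i + 1)) * (/ 2) ^ n)).
  - intros n; change (norm (e n * 2 ^ n * (4 ^ n) ^ i * M)) with (Rabs (e n * 2 ^ n * (4 ^ n) ^ i * M)).
    assert (P : 0 <= 2 ^ n * (4 ^ n) ^ i) by (apply Rmult_le_pos; apply pow_le; [|apply pow_le]; lra).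
    assert (Hle : e n * 2 ^ n * (4 ^ n) ^ i <= 2 ^ ((i + 1) * (i + 1)) * (/ 2) ^ n).
    { eapply Rle_trans; [|apply pow_half_sq_mul_le]; rewrite !Rmult_assoc.
      apply Rmult_le_compat_r; [exact P | apply He]. }
    assert (H0 : 0 <= e n * 2 ^ n * (4 ^ n) ^ i) by (rewrite Rmult_assoc; apply Rmult_le_pos; [apply He | exact P]).
    rewrite Rabs_right by (apply Rle_ge, Rmult_le_pos; auto).
    replace (M * 2 ^ ((i + 1) * (i + 1)) * (/ 2) ^ n) with (2 ^ ((i + 1) * (i + 1)) * (/ 2) ^ n * M) by ring.
    apply Rmult_le_compat_r; auto.
  - apply (@ex_series_scal_l R_AbsRing R_NormedModule), ex_series_geom; rewrite Rabs_right; lra.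
Qed.

Definition weighted_staircase (e : nat -> R) (n i : nat) (x : R) : R := e n * staircase_deriv n i x.
Definition staircase_series (e : nat -> R) : nat -> R -> R := series_tower (weighted_staircase e).

Section StaircaseSeries.
Variable e : nat -> R.
Hypothesis e_bounds : forall n, 0 <= e n <= (/ 2) ^ (n * n).

Lemma weighted_staircase_abs_le n i x :
  Rabs (weighted_staircase e n i x) <= e n * 2 ^ n * (4 ^ n) ^ i * step_deriv_bound i.
Proof.
  unfold weighted_staircase; rewrite Rabs_mult, Rabs_right by (apply Rle_ge, e_bounds).
  rewrite !Rmult_assoc; apply Rmult_le_compat_l; [apply e_bounds|].
  rewrite <- Rmult_assoc; apply staircase_deriv_abs_le.
Qed.

Lemma ex_series_weighted_staircase_bound i : ex_series (fun n => e n * 2 ^ n * (4 ^ n) ^ i * step_deriv_bound i).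
Proof. apply ex_series_weighted_bound; auto using step_deriv_bound_ge0. Qed.

Lemma weighted_staircase_tower n : deriv_tower (weighted_staircase e n).
Proof. intros i x; apply derivable_pt_lim_scal, staircase_deriv_tower. Qed.

Lemma staircase_series_tower : deriv_tower (staircase_series e).
Proof.
  exact (series_tower_deriv _ _ weighted_staircase_tower weighted_staircase_abs_le
           ex_series_weighted_staircase_bound).
Qed.

Lemma staircase_series_cv x :
  infinite_sum (fun n => e n * staircase_deriv n 0 x) (staircase_series e 0 x).
Proof. exact (series_tower_cv _ _ weighted_staircase_abs_le ex_series_weighted_staircase_bound 0 x). Qed.

End StaircaseSeries.

Lemma dist2_fst_le p q : Rabs (fst p - fst q) <= dist2 p q.
Proof.
  unfold dist2; rewrite <- sqrt_Rsqr_abs; apply sqrt_le_1_alt.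
  unfold Rsqr; simpl; pose proof (Rle_0_sqr (snd p - snd q)); unfold Rsqr in *; nra.
Qed.

Lemma dist2_snd_le p q : Rabs (snd p - snd q) <= dist2 p q.
Proof.
  unfold dist2; rewrite <- sqrt_Rsqr_abs; apply sqrt_le_1_alt.
  unfold Rsqr; simpl; pose proof (Rle_0_sqr (fst p - fst q)); unfold Rsqr in *; nra.
Qed.

Lemma continuity_pt_eps_delta f x : continuity_pt f x -> forall eps, 0 < eps ->
  exists delta, 0 < delta /\ forall y, Rabs (y - x) < delta -> Rabs (f y - f x) < eps.
Proof.
  intros Hf eps Heps; destruct (Hf eps Heps) as [delta [Hdelta Hy]].
  exists delta; split; auto; intros y Hyx.
  destruct (Req_dec y x) as [->|Hne]; [rewrite Rminus_diag, Rabs_R0; auto|].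
  apply (Hy y); repeat split; auto.
Qed.

Lemma continuous2_fst f : (forall x, continuity_pt f x) -> continuous2 (fun p => f (fst p)).
Proof.
  intros Hf p eps Heps; destruct (continuity_pt_eps_delta f (fst p) (Hf _) eps Heps) as [d [Hd H]].
  exists d; split; auto; intros q Hq; apply H.
  rewrite Rabs_minus_sym; pose proof (dist2_fst_le p q); lra.
Qed.

Lemma continuous2_snd f : (forall x, continuity_pt f x) -> continuous2 (fun p => f (snd p)).
Proof.
  intros Hf p eps Heps; destruct (continuity_pt_eps_delta f (snd p) (Hf _) eps Heps) as [d [Hd H]].
  exists d; split; auto; intros q Hq; apply H.
  rewrite Rabs_minus_sym; pose proof (dist2_snd_le p q); lra.
Qed.

Lemma continuous2_plus f g : continuous2 f -> continuous2 g -> continuous2 (fun p => f p + g p).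
Proof.
  intros Hf Hg p eps Heps.
  destruct (Hf p (eps / 2) ltac:(lra)) as [d1 [Hd1 H1]].
  destruct (Hg p (eps / 2) ltac:(lra)) as [d2 [Hd2 H2]].
  exists (Rmin d1 d2); split; [apply Rmin_pos; auto|]; intros q Hq.
  specialize (H1 q ltac:(pose proof (Rmin_l d1 d2); lra)).
  specialize (H2 q ltac:(pose proof (Rmin_r d1 d2); lra)).
  replace (f q + g q - (f p + g p)) with ((f q - f p) + (g q - g p)) by ring.
  eapply Rle_lt_trans; [apply Rabs_triang | lra].
Qed.

Lemma Ck2_of_deriv_towers (F G : nat -> R -> R) :
  deriv_tower F -> deriv_tower G ->
  forall k i l a b, Ck2 k (fun p => a * F i (fst p) + b * G l (snd p)).
Proof.
  intros HF HG.
  assert (Hcont : forall i l a b, continuous2 (fun p => a * F i (fst p) + b * G l (snd p))).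
  { intros i l a b; apply continuous2_plus;
      [apply (continuous2_fst (fun x => a * F i x)) | apply (continuous2_snd (fun y => b * G l y))];
      intros; apply continuity_pt_scal, deriv_tower_continuity; auto. }
  induction k as [|k IHk]; intros i l a b; simpl; [apply Hcont|].
  split; [apply Hcont|].
  exists (fun p => a * F (S i) (fst p) + 0 * G l (snd p)),
         (fun p => 0 * F i (fst p) + b * G (S l) (snd p)).
  repeat split; auto; intros x y; simpl.
  - replace (a * F (S i) x + 0 * G l y) with (a * F (S i) x + 0) by ring.
    apply (derivable_pt_lim_plus (fun t => a * F i t) (fun _ => b * G l y));
      [apply derivable_pt_lim_scal, HF | apply derivable_pt_lim_const].
  - replace (0 * F i x + b * G (S l) y) with (0 + b * G (S l) y) by ring.
    apply (derivable_pt_lim_plus (fun _ => a * F i x) (fun t => b * G l t));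
      [apply derivable_pt_lim_const | apply derivable_pt_lim_scal, HG].
Qed.

Definition kappa (p : pt) : R :=
  staircase_series weight_x 0 (fst p) + staircase_series weight_y 0 (snd p).

Lemma weight_x_bounds n : 0 <= weight_x n <= (/ 2) ^ (n * n).
Proof. apply weight_bounds; lia. Qed.

Lemma weight_y_bounds n : 0 <= weight_y n <= (/ 2) ^ (n * n).
Proof. apply weight_bounds; lia. Qed.

Lemma kappa_smooth : smooth2 kappa.
Proof.
  intros k.
  replace kappa with (fun p => 1 * staircase_series weight_x 0 (fst p) + 1 * staircase_series weight_y 0 (snd p))
    by (apply functional_extensionality; intros; unfold kappa; ring).
  apply Ck2_of_deriv_towers; apply staircase_series_tower; auto using weight_x_bounds, weight_y_bounds.
Qed.

Definition index_series (a b : nat -> nat) (n : nat) : R :=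
  weight_x n * INR (a n) + weight_y n * INR (b n).

Definition index_diff_bound (k : nat) : R := (weight_x k + weight_y k) * 2 ^ k.

Lemma weight_y_le_weight_x n : weight_y n <= weight_x n.
Proof. apply pow_half_antimono; nia. Qed.

Lemma weight_y_mul_pow2_le n : weight_y n * 2 ^ S n <= weight_x n.
Proof.
  unfold weight_y, weight_x, weight.
  replace (2 * (2 * n + 1) * (2 * n + 1))%nat with (S n + (8 * n * n + 7 * n + 1))%nat by nia.
  rewrite Rmult_comm, pow2_mul_pow_half; apply pow_half_antimono; nia.
Qed.

Lemma index_diff_bound_shift_le n k : index_diff_bound (S n + k) <= weight_y n / 4 * (/ 2) ^ k.
Proof.
  set (m := (S n + k)%nat); unfold index_diff_bound.
  assert (H2 : (weight_x m + weight_y m) * 2 ^ m <= 2 ^ S m * weight_x m).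
  { pose proof (weight_y_le_weight_x m); pose proof (pow_lt 2 m ltac:(lra)).
    change (2 ^ S m) with (2 * 2 ^ m); nra. }
  eapply Rle_trans; [exact H2|].
  replace (weight_y n / 4 * (/ 2) ^ k) with ((/ 2) ^ (2 * (2 * n + 1) * (2 * n + 1) + (k + 2)))
    by (unfold weight_y, weight; rewrite !pow_add; simpl; field).
  unfold weight_x, weight.
  replace (2 * (2 * m) * (2 * m))%nat with (S m + (8 * m * m - S m))%nat by (unfold m; nia).
  rewrite pow2_mul_pow_half; apply pow_half_antimono; unfold m; nia.
Qed.

Lemma ex_series_index_diff_bound : ex_series index_diff_bound.
Proof.
  apply (ex_series_ext (fun k => weight_x k * 2 ^ k * (4 ^ k) ^ 0 * 1 + weight_y k * 2 ^ k * (4 ^ k) ^ 0 * 1)).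
  { intros k; unfold index_diff_bound; simpl; ring. }
  apply (@ex_series_plus R_AbsRing R_NormedModule); apply ex_series_weighted_bound;
    auto using weight_x_bounds, weight_y_bounds; lra.
Qed.

Lemma index_diff_bound_tail_le n :
  Series index_diff_bound - sum_f_R0 index_diff_bound n <= weight_y n / 2.
Proof.
  rewrite (Series_incr_n _ (S n)) by (auto using ex_series_index_diff_bound; lia); simpl pred.
  enough (Series (fun k => index_diff_bound (S n + k)) <= Series (fun k => weight_y n / 4 * (/ 2) ^ k)).
  { rewrite Series_scal_l, Series_geom in H by (rewrite Rabs_right; lra); lra. }
  apply Series_le; [|apply (@ex_series_scal_l R_AbsRing R_NormedModule), ex_series_geom; rewrite Rabs_right; lra].
  intros k; split; [|apply index_diff_bound_shift_le].
  unfold index_diff_bound, weight_x, weight_y.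
  pose proof (weight_gt0 (2 * (S n + k))); pose proof (weight_gt0 (2 * (S n + k) + 1)).
  apply Rmult_le_pos; [lra | apply pow_le; lra].
Qed.

Lemma INR_sub_abs_ge1 p q : p <> q -> 1 <= Rabs (INR p - INR q).
Proof.
  intros Hpq; destruct (lt_dec p q) as [Hlt|Hge].
  - assert (INR p + 1 <= INR q) by (rewrite <- S_INR; apply le_INR; lia).
    rewrite Rabs_left1; lra.
  - assert (INR q + 1 <= INR p) by (rewrite <- S_INR; apply le_INR; lia).
    rewrite Rabs_right; lra.
Qed.

Lemma INR_sub_abs_le_pow2 n p q : (p < 2 ^ n)%nat -> (q < 2 ^ n)%nat -> Rabs (INR p - INR q) <= 2 ^ n - 1.
Proof.
  intros Hp Hq.
  assert (Hlt : forall r, (r < 2 ^ n)%nat -> INR r + 1 <= 2 ^ n).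
  { intros r Hr; rewrite <- S_INR; replace 2 with (INR 2) by (simpl; ring).
    rewrite <- pow_INR; apply le_INR; lia. }
  pose proof (Hlt p Hp); pose proof (Hlt q Hq); pose proof (pos_INR p); pose proof (pos_INR q).
  apply Rabs_le; lra.
Qed.

Lemma index_pair_eq n a a' b b' :
  (a < 2 ^ n)%nat -> (a' < 2 ^ n)%nat -> (b < 2 ^ n)%nat -> (b' < 2 ^ n)%nat ->
  Rabs (weight_x n * (INR a - INR a') + weight_y n * (INR b - INR b')) <= weight_y n / 2 ->
  a = a' /\ b = b'.
Proof.
  intros Ha Ha' Hb Hb' Hsmall.
  pose proof (weight_gt0 (2 * n)) as Hx; pose proof (weight_gt0 (2 * n + 1)) as Hy.
  fold (weight_x n) in Hx; fold (weight_y n) in Hy.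
  assert (Ea : a = a').
  { destruct (Nat.eq_dec a a') as [|Hne]; auto; exfalso.
    pose proof (INR_sub_abs_ge1 _ _ Hne); pose proof (INR_sub_abs_le_pow2 _ _ _ Hb Hb').
    pose proof (weight_y_mul_pow2_le n); simpl pow in *.
    pose proof (Rabs_triang_inv (weight_x n * (INR a - INR a')) (- (weight_y n * (INR b - INR b')))) as Htri.
    replace (weight_x n * (INR a - INR a') - - (weight_y n * (INR b - INR b')))
      with (weight_x n * (INR a - INR a') + weight_y n * (INR b - INR b')) in Htri by ring.
    rewrite Rabs_Ropp, !Rabs_mult, (Rabs_right (weight_x n)), (Rabs_right (weight_y n)) in Htri by lra.
    assert (weight_x n <= weight_x n * Rabs (INR a - INR a')) by (apply Rmult_le_compat_l with (r := weight_x n) in H; lra).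
    assert (weight_y n * Rabs (INR b - INR b') <= weight_y n * (2 ^ n - 1)) by (apply Rmult_le_compat_l; lra).
    pose proof (pow_lt 2 n ltac:(lra)); nra. }
  split; auto; subst a'.
  destruct (Nat.eq_dec b b') as [|Hne]; auto; exfalso.
  pose proof (INR_sub_abs_ge1 _ _ Hne).
  rewrite Rminus_diag, Rmult_0_r, Rplus_0_l, Rabs_mult, Rabs_right in Hsmall by lra; nra.
Qed.

Lemma index_series_sub_abs_le a b a' b' k :
  (a k < 2 ^ k)%nat -> (b k < 2 ^ k)%nat -> (a' k < 2 ^ k)%nat -> (b' k < 2 ^ k)%nat ->
  Rabs (index_series a b k - index_series a' b' k) <= index_diff_bound k.
Proof.
  intros Ha Hb Ha' Hb'; unfold index_series, index_diff_bound.
  replace (weight_x k * INR (a k) + weight_y k * INR (b k) - (weight_x k * INR (a' k) + weight_y k * INR (b' k)))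
    with (weight_x k * (INR (a k) - INR (a' k)) + weight_y k * (INR (b k) - INR (b' k))) by ring.
  pose proof (INR_sub_abs_le_pow2 _ _ _ Ha Ha'); pose proof (INR_sub_abs_le_pow2 _ _ _ Hb Hb').
  pose proof (weight_gt0 (2 * k)) as Hx; pose proof (weight_gt0 (2 * k + 1)) as Hy.
  fold (weight_x k) in Hx; fold (weight_y k) in Hy.
  eapply Rle_trans; [apply Rabs_triang|].
  rewrite !Rabs_mult, (Rabs_right (weight_x k)), (Rabs_right (weight_y k)) by lra.
  assert (weight_x k * Rabs (INR (a k) - INR (a' k)) <= weight_x k * 2 ^ k)
    by (apply Rmult_le_compat_l; lra).
  assert (weight_y k * Rabs (INR (b k) - INR (b' k)) <= weight_y k * 2 ^ k)
    by (apply Rmult_le_compat_l; lra).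
  lra.
Qed.

Lemma index_series_inj a b a' b' l :
  (forall n, (a n < 2 ^ n)%nat /\ (b n < 2 ^ n)%nat /\ (a' n < 2 ^ n)%nat /\ (b' n < 2 ^ n)%nat) ->
  infinite_sum (index_series a b) l -> infinite_sum (index_series a' b') l ->
  forall n, a n = a' n /\ b n = b' n.
Proof.
  intros Hr H H'.
  set (d := fun n => index_series a b n - index_series a' b' n).
  assert (Hd : Un_cv (sum_f_R0 d) 0).
  { replace 0 with (l - l) by ring.
    apply (Un_cv_ext (fun N => sum_f_R0 (index_series a b) N - sum_f_R0 (index_series a' b') N)).
    { intros N; unfold d; rewrite minus_sum; auto. }
    apply CV_minus; auto. }
  assert (Hdb : forall k, Rabs (d k) <= index_diff_bound k).
  { intros k; destruct (Hr k) as [Ha [Hb [Ha' Hb']]]; apply index_series_sub_abs_le; auto. }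
  intros n; induction n as [n IH] using (well_founded_induction lt_wf).
  assert (Hprefix : sum_f_R0 d n = d n).
  { destruct n as [|n]; simpl; auto; rewrite sum_eq_R0; [ring|].
    intros k Hk; unfold d, index_series; destruct (IH k ltac:(lia)) as [-> ->]; ring. }
  pose proof (series_tail_le d index_diff_bound 0 (Series index_diff_bound) Hd
                (Un_cv_Series _ ex_series_index_diff_bound) Hdb n) as Htail.
  rewrite Hprefix, Rminus_0_l, Rabs_Ropp in Htail.
  pose proof (index_diff_bound_tail_le n).
  destruct (Hr n) as [Ha [Hb [Ha' Hb']]].
  apply (index_pair_eq n); auto.
  unfold d, index_series in Htail.
  replace (weight_x n * (INR (a n) - INR (a' n)) + weight_y n * (INR (b n) - INR (b' n)))
    with (weight_x n * INR (a n) + weight_y n * INR (b n) - (weight_x n * INR (a' n) + weight_y n * INR (b' n)))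
    by ring; lra.
Qed.

Lemma cantor_index_seq x : cantor x ->
  exists a : nat -> nat, forall n, (a n < 2 ^ n)%nat /\ in_cantor_int n (a n) x.
Proof.
  intros Hx; exists (fun n => proj1_sig (constructive_indefinite_description _ (Hx n))).
  intros n; destruct (constructive_indefinite_description _ (Hx n)); auto.
Qed.

Lemma kappa_index_series p a b :
  (forall n, (a n < 2 ^ n)%nat /\ in_cantor_int n (a n) (fst p)) ->
  (forall n, (b n < 2 ^ n)%nat /\ in_cantor_int n (b n) (snd p)) ->
  infinite_sum (index_series a b) (kappa p).
Proof.
  intros Ha Hb.
  pose proof (staircase_series_cv _ weight_x_bounds (fst p)) as Hx.
  pose proof (staircase_series_cv _ weight_y_bounds (snd p)) as Hy.
  apply (Un_cv_ext (fun N => sum_f_R0 (fun n => weight_x n * staircase_deriv n 0 (fst p)) N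
                             + sum_f_R0 (fun n => weight_y n * staircase_deriv n 0 (snd p)) N));
    [|apply CV_plus; auto].
  intros N; rewrite <- plus_sum; apply sum_eq; intros n _; unfold index_series.
  destruct (Ha n), (Hb n); rewrite (staircase_on_interval n (a n)), (staircase_on_interval n (b n)); auto.
Qed.

Lemma kappa_inj : injective_on kappa cantor_square.
Proof.
  intros p q [Hp1 Hp2] [Hq1 Hq2] Hpq.
  destruct (cantor_index_seq _ Hp1) as [a Ha], (cantor_index_seq _ Hp2) as [b Hb].
  destruct (cantor_index_seq _ Hq1) as [a' Ha'], (cantor_index_seq _ Hq2) as [b' Hb'].
  pose proof (kappa_index_series p a b Ha Hb) as Sp; rewrite Hpq in Sp.
  assert (Hidx := index_series_inj a b a' b' (kappa q)
    ltac:(intros n; destruct (Ha n), (Hb n), (Ha' n), (Hb' n); auto)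
    Sp (kappa_index_series q a' b' Ha' Hb')).
  destruct p as [x y], q as [x' y']; f_equal; apply in_cantor_int_eq; intros n; simpl in *.
  - exists (a n); rewrite (proj1 (Hidx n)) at 2; split; [apply Ha | apply Ha'].
  - exists (b n); rewrite (proj2 (Hidx n)) at 2; split; [apply Hb | apply Hb'].
Qed.

(** * Compactness of the square of the Cantor set *)

Lemma div2_double_add m e : (e < 2)%nat -> Nat.div2 (2 * m + e) = m.
Proof.
  intros He; destruct e as [|[|]]; [rewrite Nat.add_0_r, Nat.div2_double | rewrite Nat.div2_odd' | lia]; auto.
Qed.

Lemma cantor_in_int0 x : cantor x -> in_cantor_int 0 0 x.
Proof. intros Hx; destruct (Hx 0%nat) as [j [Hj Hin]]; simpl in Hj; replace j with 0%nat in Hin by lia; auto. Qed.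

Lemma cantor_index_lt n j x : cantor x -> in_cantor_int n j x -> (j < 2 ^ n)%nat.
Proof. intros Hx Hin; destruct (Hx n) as [j' [Hj' Hin']]; rewrite (in_cantor_int_unique _ _ _ _ Hin Hin'); auto. Qed.

Lemma cantor_child n j x : cantor x -> in_cantor_int n j x ->
  exists e, (e < 2)%nat /\ in_cantor_int (S n) (2 * j + e) x.
Proof.
  intros Hx Hin; destruct (Hx (S n)) as [j' [_ Hin']].
  pose proof (in_cantor_int_unique _ _ _ _ Hin (in_cantor_int_parent _ _ _ Hin')); subst j.
  destruct (Nat.Even_or_Odd j') as [[m ->]|[m ->]].
  - exists 0%nat; rewrite Nat.div2_double, Nat.add_0_r; auto.
  - exists 1%nat; rewrite Nat.div2_odd'; auto.
Qed.

Lemma nested_cantor_int_point (j : nat -> nat) : (forall n, Nat.div2 (j (S n)) = j n) ->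
  exists x, forall n, in_cantor_int n (j n) x.
Proof.
  intros Hj; set (u := fun n => cantor_left n (j n)).
  assert (Hright : forall n m, (n <= m)%nat ->
            cantor_left m (j m) + cantor_len m <= cantor_left n (j n) + cantor_len n).
  { induction 1 as [|m Hm IHm]; [lra|].
    pose proof (cantor_right_le_parent m (j (S m))); rewrite Hj in *; lra. }
  assert (Hgrow : Un_growing u).
  { intros n; unfold u; pose proof (cantor_left_parent_le n (j (S n))); rewrite Hj in *; auto. }
  assert (Hub : has_ub u).
  { exists (cantor_left 0 (j 0%nat) + cantor_len 0); intros y [m ->]; unfold u.
    pose proof (Hright 0%nat m ltac:(lia)); pose proof (cantor_len_gt0 m); lra. }
  destruct (growing_cv u Hgrow Hub) as [x Hx]; exists x; intros n; split.
  - apply (growing_ineq u x Hgrow Hx n).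
  - apply Rnot_lt_le; intros Hlt.
    destruct (Hx (x - (cantor_left n (j n) + cantor_len n)) ltac:(lra)) as [N HN].
    specialize (HN (max N n) ltac:(lia)); unfold R_dist, u in HN; apply Rabs_def2 in HN.
    pose proof (Hright n (max N n) ltac:(lia)); pose proof (cantor_len_gt0 (max N n)); lra.
Qed.

Lemma dist2_le_abs_sum p q : dist2 p q <= Rabs (fst p - fst q) + Rabs (snd p - snd q).
Proof.
  unfold dist2; pose proof (Rabs_pos (fst p - fst q)); pose proof (Rabs_pos (snd p - snd q)).
  rewrite <- (sqrt_pow2 (Rabs (fst p - fst q) + Rabs (snd p - snd q))) by lra.
  apply sqrt_le_1_alt; rewrite <- (pow2_abs (fst p - fst q)), <- (pow2_abs (snd p - snd q)); nra.
Qed.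

Section Compactness.
Variable I : Type.
Variable U : I -> pt -> Prop.
Hypothesis U_open : forall i, open2 (U i).
Hypothesis U_cover : forall p, cantor_square p -> exists i, U i p.

Definition finitely_covered (n j k : nat) : Prop :=
  exists l : list I, forall p, cantor_square p -> in_cantor_int n j (fst p) -> in_cantor_int n k (snd p) ->
    exists i, In i l /\ U i p.

Lemma finitely_covered_of_children n j k :
  (forall e1 e2, (e1 < 2)%nat -> (e2 < 2)%nat -> finitely_covered (S n) (2 * j + e1) (2 * k + e2)) ->
  finitely_covered n j k.
Proof.
  intros H.
  destruct (H 0%nat 0%nat ltac:(lia) ltac:(lia)) as [l1 H1], (H 0%nat 1%nat ltac:(lia) ltac:(lia)) as [l2 H2].
  destruct (H 1%nat 0%nat ltac:(lia) ltac:(lia)) as [l3 H3], (H 1%nat 1%nat ltac:(lia) ltac:(lia)) as [l4 H4].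
  exists (l1 ++ l2 ++ l3 ++ l4); intros p Hp Hx Hy.
  destruct (cantor_child _ _ _ (proj1 Hp) Hx) as [e1 [He1 Hx']].
  destruct (cantor_child _ _ _ (proj2 Hp) Hy) as [e2 [He2 Hy']].
  assert (Hcov : exists i, (In i l1 \/ In i l2 \/ In i l3 \/ In i l4) /\ U i p).
  { destruct e1 as [|[|]], e2 as [|[|]]; try lia;
      [destruct (H1 p) as [i []] | destruct (H2 p) as [i []] | destruct (H3 p) as [i []] | destruct (H4 p) as [i []]];
      auto; exists i; tauto. }
  destruct Hcov as [i [Hi HU]]; exists i; rewrite !in_app_iff; auto.
Qed.

(* An uncovered square has an uncovered child; for a covered one any child will do. *)
Lemma uncovered_child n j k : exists jk : nat * nat,
  Nat.div2 (fst jk) = j /\ Nat.div2 (snd jk) = k /\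
  (~ finitely_covered n j k -> ~ finitely_covered (S n) (fst jk) (snd jk)).
Proof.
  destruct (classic (finitely_covered n j k)) as [Hc|Hc].
  - exists (2 * j, 2 * k)%nat; cbn [fst snd]; rewrite !Nat.div2_double; tauto.
  - assert (exists e1 e2, (e1 < 2)%nat /\ (e2 < 2)%nat /\ ~ finitely_covered (S n) (2 * j + e1) (2 * k + e2))
      as [e1 [e2 [He1 [He2 Hnc]]]].
    { apply NNPP; intros Hall; apply Hc, finitely_covered_of_children; intros e1 e2 He1 He2.
      apply NNPP; intros Hnc; apply Hall; exists e1, e2; auto. }
    exists (2 * j + e1, 2 * k + e2)%nat; cbn [fst snd].
    rewrite !div2_double_add; auto.
Qed.

Fixpoint uncovered_path (n : nat) : nat * nat :=
  match n with
  | O => (0, 0)%nat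
  | S n' => proj1_sig (constructive_indefinite_description _
              (uncovered_child n' (fst (uncovered_path n')) (snd (uncovered_path n'))))
  end.

Lemma uncovered_path_S n :
  Nat.div2 (fst (uncovered_path (S n))) = fst (uncovered_path n) /\
  Nat.div2 (snd (uncovered_path (S n))) = snd (uncovered_path n) /\
  (~ finitely_covered n (fst (uncovered_path n)) (snd (uncovered_path n)) ->
   ~ finitely_covered (S n) (fst (uncovered_path (S n))) (snd (uncovered_path (S n)))).
Proof. simpl; destruct (constructive_indefinite_description _ _); auto. Qed.

Lemma cantor_square_finite_subcover : exists l : list I, forall p, cantor_square p -> exists i, In i l /\ U i p.
Proof.
  apply NNPP; intros Hnone.
  set (jn := fun n => fst (uncovered_path n)); set (kn := fun n => snd (uncovered_path n)).
  assert (Hbad : forall n, ~ finitely_covered n (jn n) (kn n)).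
  { induction n as [|n IHn]; [|apply uncovered_path_S; auto].
    intros [l Hl]; apply Hnone; exists l; intros p Hp; apply Hl; auto; apply cantor_in_int0, Hp. }
  destruct (nested_cantor_int_point jn) as [x Hx]; [intros; apply uncovered_path_S|].
  destruct (nested_cantor_int_point kn) as [y Hy]; [intros; apply uncovered_path_S|].
  assert (Hwit : forall n, exists p, cantor_square p /\ in_cantor_int n (jn n) (fst p) /\ in_cantor_int n (kn n) (snd p)).
  { intros n; apply NNPP; intros Hno; apply (Hbad n); exists nil; intros p Hp H1 H2.
    exfalso; apply Hno; exists p; auto. }
  assert (Hxy : cantor_square (x, y)).
  { split; intros n; destruct (Hwit n) as [p [Hp [H1 H2]]]; simpl.
    - exists (jn n); split; auto; apply (cantor_index_lt n _ (fst p)); auto; apply Hp.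
    - exists (kn n); split; auto; apply (cantor_index_lt n _ (snd p)); auto; apply Hp. }
  destruct (U_cover _ Hxy) as [i Hi], (U_open i _ Hi) as [eps [Heps Hball]].
  destruct (pow_lt_1_zero (/ 2) ltac:(rewrite Rabs_right; lra) (eps / 2) ltac:(lra)) as [n Hn].
  specialize (Hn n (le_n n)); rewrite Rabs_right in Hn by (left; apply pow_lt; lra).
  apply (Hbad n); exists (i :: nil); intros p Hp H1 H2; exists i; split; [left; auto|].
  apply Hball; eapply Rle_lt_trans; [apply dist2_le_abs_sum|]; simpl.
  destruct (Hx n), (Hy n), H1, H2; pose proof (cantor_len_le n).
  assert (Rabs (x - fst p) <= cantor_len n) by (apply Rabs_le; lra).
  assert (Rabs (y - snd p) <= cantor_len n) by (apply Rabs_le; lra); lra.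
Qed.

End Compactness.

Lemma cantor_square_compact : compact2 cantor_square.
Proof. intros I U HU Hcov; apply (cantor_square_finite_subcover I U HU Hcov). Qed.

(** * The measure of the square of the Cantor set *)

Lemma sum_lt_sum_f_R0 f N : sum_lt f (S N) = sum_f_R0 f N.
Proof. induction N as [|N IHN]; simpl in *; [ring | rewrite <- IHN; auto]. Qed.

Lemma pow2_mul_cantor_len n : 2 ^ n * cantor_len n = (1 + (/ 2) ^ n) / 2.
Proof.
  unfold cantor_len; simpl; rewrite <- Rmult_assoc.
  replace (2 ^ n * (/ 2 * (/ 2) ^ n)) with (/ 2 * (2 ^ n * (/ 2) ^ n)) by ring.
  rewrite <- Rpow_mult_distr; replace (2 * / 2) with 1 by field; rewrite pow1; field.
Qed.

(* The [2 ^ n * 2 ^ n] level-[n] squares, enumerated as [j + k * 2 ^ n], followed by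
   degenerate rectangles. *)
Lemma cantor_square_level_cover n : rect_cover_sums cantor_square (((1 + (/ 2) ^ n) / 2) ^ 2).
Proof.
  set (M := (2 ^ n)%nat); assert (HM : M <> 0%nat) by (apply Nat.pow_nonzero; lia).
  set (K := (M * M)%nat).
  exists (fun i => if lt_dec i K then cantor_left n (i mod M) else 0),
         (fun i => if lt_dec i K then cantor_left n (i mod M) + cantor_len n else 0),
         (fun i => if lt_dec i K then cantor_left n (i / M) else 0),
         (fun i => if lt_dec i K then cantor_left n (i / M) + cantor_len n else 0).
  pose proof (cantor_len_gt0 n); split; [|split].
  - intros i; destruct (lt_dec i K); lra.
  - intros p [Hx Hy]; destruct (Hx n) as [j [Hj Ij]], (Hy n) as [k [Hk Ik]].
    exists (j + k * M)%nat.
    destruct (lt_dec (j + k * M) K) as [_|Hge]; [|unfold K, M in *; nia].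
    rewrite Nat.Div0.mod_add, Nat.mod_small, Nat.div_add, Nat.div_small by auto.
    unfold in_cantor_int in *; simpl; lra.
  - intros eps Heps; exists K; intros N HN; unfold R_dist.
    rewrite (sum_eq _ (fun i => cantor_len n * cantor_len n * (if lt_dec i K then 1 else 0)))
      by (intros i _; destruct (lt_dec i K); ring).
    rewrite <- sum_lt_sum_f_R0, sum_lt_scal, sum_lt_indicator.
    replace (Nat.min K (S N)) with K by lia; unfold K.
    rewrite mult_INR; unfold M; rewrite pow_INR; replace (INR 2) with 2 by (simpl; ring).
    rewrite <- pow2_mul_cantor_len.
    replace (cantor_len n * cantor_len n * (2 ^ n * 2 ^ n) - (2 ^ n * cantor_len n) ^ 2) with 0 by ring.
    rewrite Rabs_R0; auto.
Qed.

Lemma cantor_square_measure_le m :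
  (forall s, rect_cover_sums cantor_square s -> m <= s) -> m <= 1 / 4.
Proof.
  intros Hm; apply Rle_plus_epsilon; intros eps Heps.
  destruct (pow_lt_1_zero (/ 2) ltac:(rewrite Rabs_right; lra) eps Heps) as [n Hn].
  specialize (Hn n (le_n n)); rewrite Rabs_right in Hn by (left; apply pow_lt; lra).
  pose proof (Hm _ (cantor_square_level_cover n)); pose proof (pow_half_bounds n); nra.
Qed.

Lemma in_cantor_int_ancestor k m j x : in_cantor_int (m + k) j x -> in_cantor_int m (j / 2 ^ k) x.
Proof.
  revert j; induction k as [|k IHk]; intros j Hin.
  - rewrite Nat.add_0_r in Hin; rewrite Nat.pow_0_r, Nat.div_1_r; auto.
  - rewrite Nat.add_succ_r in Hin; apply in_cantor_int_parent, IHk in Hin.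
    rewrite Nat.div2_div, Nat.Div0.div_div in Hin; rewrite Nat.pow_succ_r'; auto.
Qed.

Lemma cantor_left_descendant k n j : cantor_left (n + k) (j * 2 ^ k) = cantor_left n j.
Proof.
  revert n j; induction k as [|k IHk]; intros n j.
  - rewrite Nat.add_0_r, Nat.mul_1_r; auto.
  - rewrite Nat.add_succ_r, Nat.pow_succ_r', Nat.mul_assoc, (Nat.mul_comm j 2), <- Nat.mul_assoc.
    rewrite cantor_left_double; apply IHk.
Qed.

Lemma cantor_left_in_cantor n j : (j < 2 ^ n)%nat -> cantor (cantor_left n j).
Proof.
  intros Hj m; pose proof (cantor_len_gt0 n).
  destruct (le_lt_dec m n) as [Hmn|Hnm].
  - exists (j / 2 ^ (n - m))%nat; split.
    + apply Nat.Div0.div_lt_upper_bound; rewrite <- Nat.pow_add_r.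
      replace (n - m + m)%nat with n by lia; auto.
    + apply in_cantor_int_ancestor; replace (m + (n - m))%nat with n by lia.
      unfold in_cantor_int; lra.
  - replace m with (n + (m - n))%nat by lia; set (k := (m - n)%nat).
    exists (j * 2 ^ k)%nat; split.
    + rewrite Nat.pow_add_r; assert (2 ^ k <> 0)%nat by (apply Nat.pow_nonzero; lia); nia.
    + unfold in_cantor_int; rewrite cantor_left_descendant; pose proof (cantor_len_gt0 (n + k)); lra.
Qed.

Lemma sum_lt_nonneg f J : (forall j, (j < J)%nat -> 0 <= f j) -> 0 <= sum_lt f J.
Proof.
  intros H; eapply Rle_trans; [|apply (sum_lt_le (fun _ => 0)); auto].
  rewrite sum_lt_const; lra.
Qed.

Lemma sum_lt_ge_term f J j0 : (j0 < J)%nat -> (forall j, (j < J)%nat -> 0 <= f j) -> f j0 <= sum_lt f J.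
Proof.
  induction J as [|J IHJ]; intros Hj0 Hf; [lia|]; simpl.
  destruct (Nat.eq_dec j0 J) as [->|Hne].
  - pose proof (sum_lt_nonneg f J ltac:(intros; apply Hf; lia)); lra.
  - pose proof (IHJ ltac:(lia) ltac:(intros; apply Hf; lia)); pose proof (Hf J ltac:(lia)); lra.
Qed.

Lemma sum_lt_swap (f : nat -> nat -> R) K J :
  sum_lt (fun i => sum_lt (f i) J) K = sum_lt (fun j => sum_lt (fun i => f i j) K) J.
Proof.
  induction K as [|K IHK]; simpl.
  - rewrite sum_lt_const; ring.
  - rewrite IHK, <- sum_lt_plus; auto.
Qed.

Lemma sum_lt_mult f g K J : sum_lt f K * sum_lt g J = sum_lt (fun i => sum_lt (fun j => f i * g j) J) K.
Proof. induction K as [|K IHK]; simpl; [ring|]; rewrite Rmult_plus_distr_r, IHK, sum_lt_scal; auto. Qed.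

Lemma sum_lt_pow_half J : sum_lt (fun i => (/ 2) ^ S i) J = 1 - (/ 2) ^ J.
Proof. induction J as [|J IHJ]; cbn [sum_lt]; [simpl; ring | rewrite IHJ; simpl; field]. Qed.

(* [X i] x [Y i] are (weighted) combinatorial rectangles covering an [M] x [M] grid. *)
Lemma grid_cover_size_ge (M K : nat) (X Y : nat -> nat -> R) :
  (forall i j, 0 <= X i j) -> (forall i k, 0 <= Y i k) ->
  (forall j k, (j < M)%nat -> (k < M)%nat -> exists i, (i < K)%nat /\ 1 <= X i j * Y i k) ->
  INR M * INR M <= sum_lt (fun i => sum_lt (X i) M * sum_lt (Y i) M) K.
Proof.
  intros HX HY Hcov.
  replace (INR M * INR M) with (sum_lt (fun j => sum_lt (fun k => 1) M) M)
    by (rewrite !sum_lt_const; ring).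
  rewrite (sum_lt_ext (fun i => sum_lt (X i) M * sum_lt (Y i) M)
             (fun i => sum_lt (fun j => sum_lt (fun k => X i j * Y i k) M) M))
    by (intros; apply sum_lt_mult).
  rewrite (sum_lt_swap (fun i j => sum_lt (fun k => X i j * Y i k) M)).
  apply sum_lt_le; intros j Hj; rewrite (sum_lt_swap (fun i k => X i j * Y i k)).
  apply sum_lt_le; intros k Hk; destruct (Hcov j k Hj Hk) as [i [Hi H1]].
  eapply Rle_trans; [exact H1|].
  apply (sum_lt_ge_term (fun i => X i j * Y i k)); auto; intros; apply Rmult_le_pos; auto.
Qed.

Definition int_inside (n : nat) (lo hi : R) (j : nat) : R :=
  if Rle_dec lo (cantor_left n j) then
    if Rle_dec (cantor_left n j + cantor_len n) hi then 1 else 0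
  else 0.

Lemma int_inside_ge0 n lo hi j : 0 <= int_inside n lo hi j.
Proof. unfold int_inside; destruct (Rle_dec _ _); [destruct (Rle_dec _ _)|]; lra. Qed.

Lemma cantor_len_mul_int_inside_le_prefix n lo hi J :
  cantor_len n * sum_lt (int_inside n lo hi) J <= Rmax 0 (Rmin hi (cantor_left n J) - lo).
Proof.
  induction J as [|J IHJ]; simpl sum_lt; [rewrite Rmult_0_r; apply Rmax_l|].
  pose proof (cantor_left_S n J); pose proof (cantor_len_gt0 n); pose proof (cantor_gap_gt0 n).
  rewrite Rmult_plus_distr_l; unfold int_inside at 2.
  destruct (Rle_dec lo (cantor_left n J)) as [K1|K1];
    [destruct (Rle_dec (cantor_left n J + cantor_len n) hi) as [K2|K2]|].
  - rewrite Rmin_right, Rmax_right in IHJ by lra.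
    eapply Rle_trans; [|apply Rmax_r]; unfold Rmin; destruct (Rle_dec hi (cantor_left n (S J))); lra.
  - rewrite Rmult_0_r, Rplus_0_r; eapply Rle_trans; [apply IHJ|]; apply Rle_max_compat_l.
    unfold Rmin; destruct (Rle_dec hi (cantor_left n J)), (Rle_dec hi (cantor_left n (S J))); lra.
  - rewrite Rmult_0_r, Rplus_0_r; eapply Rle_trans; [apply IHJ|]; apply Rle_max_compat_l.
    unfold Rmin; destruct (Rle_dec hi (cantor_left n J)), (Rle_dec hi (cantor_left n (S J))); lra.
Qed.

Lemma cantor_len_mul_int_inside_le n lo hi J :
  lo <= hi -> cantor_len n * sum_lt (int_inside n lo hi) J <= hi - lo.
Proof.
  intros H; eapply Rle_trans; [apply cantor_len_mul_int_inside_le_prefix|].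
  unfold Rmax, Rmin; destruct (Rle_dec hi (cantor_left n J)), (Rle_dec 0 _); lra.
Qed.

Lemma list_nat_bound (l : list nat) : exists N, forall i, In i l -> (i <= N)%nat.
Proof.
  induction l as [|i l [N HN]]; [exists 0%nat; intros ? []|].
  exists (Nat.max i N); intros k [->|Hk]; [lia | pose proof (HN k Hk); lia].
Qed.

Lemma pow_half_lt_finite (f : nat -> R) N :
  (forall i, 0 < f i) -> exists n, forall i, (i <= N)%nat -> (/ 2) ^ n < f i.
Proof.
  intros Hf; induction N as [|N [n Hn]].
  - destruct (pow_lt_1_zero (/ 2) ltac:(rewrite Rabs_right; lra) (f 0%nat) (Hf 0%nat)) as [n Hn].
    exists n; intros i Hi; replace i with 0%nat by lia.
    specialize (Hn n (le_n n)); rewrite Rabs_right in Hn by (left; apply pow_lt; lra); auto.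
  - destruct (pow_lt_1_zero (/ 2) ltac:(rewrite Rabs_right; lra) (f (S N)) (Hf (S N))) as [m Hm].
    exists (Nat.max n m); intros i Hi.
    destruct (Nat.eq_dec i (S N)) as [->|Hne].
    + specialize (Hm m (le_n m)); rewrite Rabs_right in Hm by (left; apply pow_lt; lra).
      eapply Rle_lt_trans; [apply pow_half_antimono, Nat.le_max_r | auto].
    + eapply Rle_lt_trans; [apply pow_half_antimono, Nat.le_max_l | apply Hn; lia].
Qed.

Lemma open2_box a b c d : open2 (fun q => a < fst q < b /\ c < snd q < d).
Proof.
  intros p [[Ha Hb] [Hc Hd]].
  exists (Rmin (Rmin (fst p - a) (b - fst p)) (Rmin (snd p - c) (d - snd p))).
  pose proof (Rmin_l (fst p - a) (b - fst p)); pose proof (Rmin_r (fst p - a) (b - fst p)).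
  pose proof (Rmin_l (snd p - c) (d - snd p)); pose proof (Rmin_r (snd p - c) (d - snd p)).
  pose proof (Rmin_l (Rmin (fst p - a) (b - fst p)) (Rmin (snd p - c) (d - snd p))).
  pose proof (Rmin_r (Rmin (fst p - a) (b - fst p)) (Rmin (snd p - c) (d - snd p))).
  split; [repeat apply Rmin_pos; lra|]; intros q Hq.
  assert (Hx : Rabs (fst q - fst p) < Rmin (Rmin (fst p - a) (b - fst p)) (Rmin (snd p - c) (d - snd p)))
    by (rewrite Rabs_minus_sym; pose proof (dist2_fst_le p q); lra).
  assert (Hy : Rabs (snd q - snd p) < Rmin (Rmin (fst p - a) (b - fst p)) (Rmin (snd p - c) (d - snd p)))
    by (rewrite Rabs_minus_sym; pose proof (dist2_snd_le p q); lra).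
  apply Rabs_def2 in Hx; apply Rabs_def2 in Hy; lra.
Qed.

Section CoverLowerBound.
Variables a b c d : nat -> R.
Variables s eps : R.
Hypothesis rect_ok : forall i, a i <= b i /\ c i <= d i.
Hypothesis rect_cover : forall p, cantor_square p ->
  exists i, a i <= fst p <= b i /\ c i <= snd p <= d i.
Hypothesis area_sum : infinite_sum (fun i => (b i - a i) * (d i - c i)) s.
Hypothesis eps_bounds : 0 < eps <= 1.

(* Enlarging the [i]-th rectangle by [margin i] on each side adds at most
   [eps / 2 ^ (i + 1)] to its area. *)
Definition margin (i : nat) : R := eps * (/ 2) ^ S i / (4 * (b i - a i + (d i - c i) + 1)).

Lemma margin_gt0 i : 0 < margin i.
Proof.
  destruct (rect_ok i); unfold margin; apply Rdiv_lt_0_compat; [|lra].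
  apply Rmult_lt_0_compat; [lra | apply pow_lt; lra].
Qed.

Lemma enlarged_area_le i :
  (b i - a i + 2 * margin i) * (d i - c i + 2 * margin i) <= (b i - a i) * (d i - c i) + eps * (/ 2) ^ S i.
Proof.
  destruct (rect_ok i); pose proof (margin_gt0 i); pose proof (pow_half_bounds (S i)).
  assert (Hm : margin i * (4 * (b i - a i + (d i - c i) + 1)) = eps * (/ 2) ^ S i)
    by (unfold margin; field; lra).
  assert (margin i <= 1 / 4).
  { apply Rmult_le_reg_r with (4 * (b i - a i + (d i - c i) + 1)); [lra|]; rewrite Hm; nra. }
  nra.
Qed.

Lemma enlarged_count_le n i M :
  (cantor_len n * sum_lt (int_inside n (a i - margin i) (b i + margin i)) M) *
  (cantor_len n * sum_lt (int_inside n (c i - margin i) (d i + margin i)) M)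
  <= (b i - a i) * (d i - c i) + eps * (/ 2) ^ S i.
Proof.
  destruct (rect_ok i); pose proof (margin_gt0 i); pose proof (cantor_len_gt0 n).
  eapply Rle_trans; [|apply enlarged_area_le].
  apply Rmult_le_compat;
    try (apply Rmult_le_pos; [lra | apply sum_lt_nonneg; intros; apply int_inside_ge0]).
  - eapply Rle_trans; [apply cantor_len_mul_int_inside_le; lra | lra].
  - eapply Rle_trans; [apply cantor_len_mul_int_inside_le; lra | lra].
Qed.

Definition near_rect (i : nat) (q : pt) : Prop :=
  a i - margin i / 2 < fst q < b i + margin i / 2 /\ c i - margin i / 2 < snd q < d i + margin i / 2.

Lemma near_rect_cover p : cantor_square p -> exists i, near_rect i p.
Proof.
  intros Hp; destruct (rect_cover p Hp) as [i Hi]; exists i; pose proof (margin_gt0 i).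
  unfold near_rect; lra.
Qed.

Lemma cover_sum_ge_quarter : 1 / 4 <= s + eps.
Proof.
  destruct (cantor_square_compact nat near_rect (fun i => open2_box _ _ _ _) near_rect_cover) as [l Hl].
  destruct (list_nat_bound l) as [N HN].
  destruct (pow_half_lt_finite (fun i => margin i / 2) N) as [n Hn].
  { intros i; pose proof (margin_gt0 i); lra. }
  set (M := (2 ^ n)%nat); pose proof (cantor_len_le n); pose proof (cantor_len_gt0 n).
  set (X := fun i => int_inside n (a i - margin i) (b i + margin i)).
  set (Y := fun i => int_inside n (c i - margin i) (d i + margin i)).
  assert (Hgrid : forall j k, (j < M)%nat -> (k < M)%nat -> exists i, (i < S N)%nat /\ 1 <= X i j * Y i k).
  { intros j k Hj Hk.
    destruct (Hl (cantor_left n j, cantor_left n k)) as [i [Hi [Hx Hy]]];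
      [split; apply cantor_left_in_cantor; auto|].
    specialize (HN i Hi); specialize (Hn i HN); simpl in Hx, Hy.
    exists i; split; [lia|]; unfold X, Y, int_inside.
    repeat destruct (Rle_dec _ _); lra. }
  assert (Hcount := grid_cover_size_ge M (S N) X Y
    (fun i j => int_inside_ge0 _ _ _ j) (fun i k => int_inside_ge0 _ _ _ k) Hgrid).
  assert (Hsquares : INR M * INR M * (cantor_len n * cantor_len n) = ((1 + (/ 2) ^ n) / 2) ^ 2).
  { unfold M; rewrite pow_INR; replace (INR 2) with 2 by (simpl; ring).
    rewrite <- pow2_mul_cantor_len; ring. }
  assert (Harea : sum_lt (fun i => sum_lt (X i) M * sum_lt (Y i) M) (S N) * (cantor_len n * cantor_len n)
                  <= s + eps).
  { rewrite Rmult_comm, <- sum_lt_scal.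
    eapply Rle_trans; [apply sum_lt_le; intros i _|].
    { replace (cantor_len n * cantor_len n * (sum_lt (X i) M * sum_lt (Y i) M))
        with ((cantor_len n * sum_lt (X i) M) * (cantor_len n * sum_lt (Y i) M)) by ring.
      apply enlarged_count_le. }
    rewrite sum_lt_plus, sum_lt_scal, sum_lt_pow_half, sum_lt_sum_f_R0.
    assert (sum_f_R0 (fun i => (b i - a i) * (d i - c i)) N <= s).
    { apply sum_incr; auto; intros i; destruct (rect_ok i); apply Rmult_le_pos; lra. }
    pose proof (pow_half_bounds (S N)); nra. }
  pose proof (pow_half_bounds n).
  assert (0 <= cantor_len n * cantor_len n) by nra.
  apply Rmult_le_compat_r with (r := cantor_len n * cantor_len n) in Hcount; nra.
Qed.

End CoverLowerBound.

Lemma cantor_square_measure_ge s : rect_cover_sums cantor_square s -> 1 / 4 <= s.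
Proof.
  intros [a [b [c [d [Hok [Hcov Hsum]]]]]]; apply Rle_plus_epsilon; intros eps Heps.
  pose proof (cover_sum_ge_quarter a b c d s (Rmin eps 1) Hok Hcov Hsum
                (conj (Rmin_pos _ _ Heps Rlt_0_1) (Rmin_r eps 1))).
  pose proof (Rmin_l eps 1); lra.
Qed.

Theorem theorem3 :
  exists (A : pt -> Prop) (kappa : pt -> R),
    compact2 A /\ lambda2_is A (1/4) /\ smooth2 kappa /\ injective_on kappa A.
Proof.
  exists cantor_square, kappa; repeat split.
  - apply cantor_square_compact.
  - apply cantor_square_measure_ge.
  - apply cantor_square_measure_le.
  - apply kappa_smooth.
  - apply kappa_inj.
Qed.
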